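(* For every integer $k\ge 3$, $\mathcal{C}_2(2k,k,2)\le 2^{2k}+6(2^k-1)$.
   Context: A $q$-covering design $\mathcal{C}_q(n,k,r)$ is a collection of $k$-dimensional subspaces of $\mathbb{F}_q^n$ such that every $r$-dimensional subspace of $\mathbb{F}_q^n$ is contained in at least one member; $\mathcal{C}_q(n,k,r)$ denotes the minimum size of such a collection. *)

From HB Require Import structures.
From mathcomp Require Import all_boot all_order all_algebra all_field.
Set Implicit Arguments. Unset Strict Implicit. Unset Printing Implicit Defensive.
Import GRing.Theory.
Local Open Scope ring_scope.

(* Subspaces of a finite-dimensional vector space over a finite field form a
   finite type (they are represented by square matrices over F). *)
Import VectorInternalTheory.
HB.instance Definition _ (F : finFieldType) (n : nat) :=
  [Countable of {vspace 'rV[F]_n} by <:].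
Definition vspace_rV_finite_axiom (F : finFieldType) (n : nat) :=
  @pcan_enumP {vspace 'rV[F]_n} _ _ _ (can_pcan (@vs2mxK F 'rV[F]_n)).
HB.instance Definition _ (F : finFieldType) (n : nat) :=
  isFinite.Build {vspace 'rV[F]_n} (@vspace_rV_finite_axiom F n).

Definition is_q_covering (F : finFieldType) (n k r : nat)
    (C : {set {vspace 'rV[F]_n}}) : bool :=
  [forall U in C, \dim U == k] &&
  [forall V : {vspace 'rV[F]_n}, (\dim V == r) ==> [exists U in C, (V <= U)%VS]].

(* The minimum is taken
   over the (finite) type of all sets of subspaces; the default value #|T| of
   the fold is only attained if no covering design exists (never the case
   when r <= k <= n). *)
Definition q_covering_number (F : finFieldType) (n k r : nat) : nat :=
  \big[minn/#|{: {set {vspace 'rV[F]_n}}}|]_(C : {set {vspace 'rV[F]_n}}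
     | is_q_covering k r C) #|C|.

(* Identify F_2^(2k) with V = L x L, where L = GF(2^k) is an F_2-space of
   dimension k.  A 2-dimensional subspace is covered by a subspace U as soon
   as two spanning vectors lie in U, so it suffices to exhibit
   2^(2k) + 6 (2^k - 1) subspaces of V of dimension at most k such that any
   two vectors of V lie in a common one (they are then enlarged to dimension
   exactly k).  The family consists of
   - the graphs {(x, a x + b x^2)} of the F_2-linear maps x |-> a x + b x^2,
     linear because squaring is additive in characteristic 2; by interpolation
     they contain any two points (x1, y1), (x2, y2) with x1, x2 distinct and
     nonzero;
   - for each nonzero x, six spaces <(x, s)> + ({0} x ker f), where f runs
     over the three nonzero functionals of a 2-dimensional pencil P_x and s
     over {0, w} with f w = 1.  As one member of a pencil vanishes at any
     given y, they cover the pairs (0, y), (x, y'); since the pencils P_x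
     together exhaust the seven nonzero forms spanned by three coordinate
     forms, they also cover the pairs (0, y), (0, y'). *)
From HB Require Import structures.
From mathcomp Require Import all_boot all_order all_algebra all_field.
From mathcomp Require Import ring.
Set Implicit Arguments. Unset Strict Implicit. Unset Printing Implicit Defensive.
Import Order.TTheory GRing.Theory VectorInternalTheory.

Section F2Arithmetic.
Local Open Scope ring_scope.

Lemma F2_cases (a : 'F_2) : a = 0 \/ a = 1.
Proof. by case: a => [[|[|n]] //= H]; [left|right]; apply/val_inj. Qed.

Lemma F2_add11 : (1 + 1 : 'F_2) = 0. Proof. by apply/val_inj. Qed.

(* Any two vectors of F_2^3 are annihilated by one of the seven nonzero
   linear forms (the dual statement of: two points span at most a line of
   the Fano plane). *)
Lemma F2_fano (a0 a1 a2 b0 b1 b2 : 'F_2) :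
  [|| (a0 == 0) && (b0 == 0), (a1 == 0) && (b1 == 0),
      (a0 + a1 == 0) && (b0 + b1 == 0), (a2 == 0) && (b2 == 0),
      (a0 + a2 == 0) && (b0 + b2 == 0), (a1 + a2 == 0) && (b1 + b2 == 0)
    | (a0 + (a1 + a2) == 0) && (b0 + (b1 + b2) == 0)].
Proof.
by case: (F2_cases a0) => ->; case: (F2_cases a1) => ->;
   case: (F2_cases a2) => ->; case: (F2_cases b0) => ->;
   case: (F2_cases b1) => ->; case: (F2_cases b2) => ->;
   rewrite ?addr0 ?add0r ?F2_add11 ?eqxx ?oner_eq0 ?orbT.
Qed.

End F2Arithmetic.

Section Dimensions.
Variable K : fieldType.

Lemma dim_img_le (aT rT : vectType K) (f : 'Hom(aT, rT)) (U : {vspace aT}) :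
  \dim (f @: U) <= \dim U.
Proof. by rewrite -(limg_ker_dim f U) leq_addl. Qed.

Lemma dim_lker_lt (aT rT : vectType K) (f : 'Hom(aT, rT)) (y : aT) :
  f y != 0%R -> \dim (lker f) < \dim {:aT}.
Proof.
move=> fy; rewrite ltn_neqAle dimvS ?subvf // andbT.
apply: contra fy => /eqP eq_dim.
have /eqP kerF : lker f == fullv by rewrite eqEdim subvf eq_dim leqnn.
by rewrite -memv_ker kerF memvf.
Qed.

Variable vT : vectType K.

Lemma dim_add_line (W : {vspace vT}) (v : vT) :
  v \notin W -> \dim (W + <[v]>) = (\dim W).+1.
Proof.
move=> vW; have v0 : v != 0%R by apply: contraNneq vW => ->; apply: mem0v.
rewrite dimv_disjoint_sum ?dim_vline ?v0 ?addn1 //.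
apply/eqP; rewrite -subv0; apply/subvP => w /memv_capP[wW /vlineP[c wE]].
rewrite wE memv0 scaler_eq0 (negPf v0) orbF; apply: contraNT vW => c0.
by rewrite -(scalerK c0 v) memvZ // -wE.
Qed.

Lemma subspace_extension (U : {vspace vT}) (k : nat) :
  \dim U <= k <= dim vT -> exists2 W : {vspace vT}, (U <= W)%VS & \dim W = k.
Proof.
elim: k => [|k IHk] /andP[Uk kv].
  by exists U => //; apply/eqP; rewrite -leqn0.
have [<-|neqUk] := eqVneq (\dim U) k.+1; first by exists U.
have [W UW dimW] : exists2 W : {vspace vT}, (U <= W)%VS & \dim W = k.
  by apply: IHk; rewrite -ltnS ltn_neqAle neqUk Uk ltnW.
have /subvPn[v _ vW] : ~~ (fullv <= W)%VS.
  by apply: contraTN kv => /dimvS; rewrite dimvf dimW -ltnNge.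
exists (W + <[v]>)%VS; first exact: subv_trans UW (addvSl _ _).
by rewrite dim_add_line // dimW.
Qed.

Lemma dim2_span (W : {vspace vT}) :
  \dim W = 2 -> exists u v, W = (<[u]> + <[v]>)%VS.
Proof.
move=> dimW; have /andP[/eqP spanW _] := vbasisP W.
have : size (vbasis W) = 2 by rewrite size_tuple dimW.
move: spanW; case: (tval (vbasis W)) => [|u [|v [|]]] //= <- _.
by exists u, v; rewrite span_cons span_seq1.
Qed.

End Dimensions.

Lemma covering_number_le (F : finFieldType) (V : vectType F) (k : nat)
    (fam : seq {vspace V}) :
  k <= dim V -> {in fam, forall U, \dim U <= k} ->
  (forall u v : V, exists2 U, U \in fam & (u \in U) && (v \in U)) ->
  q_covering_number F (dim V) k 2 <= size fam.
Proof.
move=> kV famk cover; set n := dim V.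
pose f : 'Hom(V, 'rV[F]_n) := linfun v2r.
have fr2v (u : 'rV[F]_n) : f (@r2v _ V u) = u by rewrite lfunE; exact: r2vK.
have /fin_all_exists2[ext extS extD] : forall W : {vspace 'rV[F]_n},
    exists2 W', (W <= W')%VS & (\dim W <= k -> \dim W' = k).
  move=> W; have [Wk|kW] := leqP (\dim W) k.
    have [|W' WW' dimW'] := @subspace_extension _ _ W k.
      by rewrite Wk /dim /= mul1n.
    by exists W'.
  by exists W => // Wk; move: kW; rewrite ltnNge Wk.
pose C := [set W in map (fun U : {vspace V} => ext (f @: U)%VS) fam].
have covC : is_q_covering k 2 C.
  apply/andP; split; apply/forallP => W; apply/implyP.
    rewrite inE => /mapP[U fU ->]; apply/eqP/extD.
    exact: leq_trans (dim_img_le _ _) (famk _ fU).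
  move=> /eqP /dim2_span[u [v ->]].
  have [U fU /andP[uU vU]] := cover (@r2v _ V u) (@r2v _ V v).
  apply/existsP; exists (ext (f @: U)%VS); rewrite inE map_f //=.
  apply: subv_trans (extS _); rewrite subv_add -!memvE.
  by rewrite -(fr2v u) -(fr2v v) !memv_img.
rewrite /q_covering_number; apply: (@leq_trans #|C|).
  exact: (bigmin_le_cond (T := nat) _ (fun D : {set {vspace 'rV[F]_n}} => #|D|) covC).
by rewrite cardsE (leq_trans (card_size _)) ?size_map.
Qed.

Section PairCoveringFamily.
Local Open Scope ring_scope.
Variables (F : finFieldType) (charF : 2 \in [pchar F]).
Local Notation L := (pPrimeCharType charF).
Local Notation V := (L * L)%type.
Hypothesis dimL3 : (2 < \dim {:L})%N.

Lemma char2L : 2 \in [pchar L]. Proof. exact: charF. Qed.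

Definition graph_map (a b x : L) : V := (x, a * x + b * x ^+ 2).

Fact graph_map_linear a b : linear (graph_map a b).
Proof.
move=> c u v; rewrite /graph_map.
case: (F2_cases c) => ->; rewrite ?scale0r ?add0r ?scale1r //=; congr (_, _).
by rewrite /= sqrrD (mulrn_pchar char2L) addr0; ring.
Qed.
HB.instance Definition _ a b :=
  GRing.isLinear.Build 'F_2 L V _ (graph_map a b) (graph_map_linear a b).

Definition graph (a b : L) : {vspace V} := limg (linfun (graph_map a b)).

Lemma mem_graph a b x : graph_map a b x \in graph a b.
Proof. by rewrite -[graph_map a b x]lfunE memv_img ?memvf. Qed.

Lemma dim_graph a b : (\dim (graph a b) <= \dim {:L})%N.
Proof. exact: dim_img_le. Qed.

(* Interpolation: the system a x_i + b x_i^2 = y_i (i = 1, 2) has a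
   solution when x1, x2 are distinct and nonzero (its determinant is
   x1 x2 (x1 - x2)). *)
Lemma graph_interpolation x1 x2 y1 y2 : x1 != 0 -> x2 != 0 -> x1 != x2 ->
  exists a b, graph_map a b x1 = (x1, y1) /\ graph_map a b x2 = (x2, y2).
Proof.
move=> x1n0 x2n0 x12.
have det0 : x1 ^+ 2 * x2 - x1 * x2 ^+ 2 != 0.
  have -> : x1 ^+ 2 * x2 - x1 * x2 ^+ 2 = x1 * x2 * (x1 - x2) by ring.
  by rewrite !mulf_neq0 // subr_eq0.
set b := (y1 * x2 - y2 * x1) / (x1 ^+ 2 * x2 - x1 * x2 ^+ 2).
exists ((y1 - b * x1 ^+ 2) / x1), b.
by split; congr (_, _); rewrite /b; field; rewrite det0 x1n0.
Qed.

Definition vert (y : L) : V := (0, y).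

Fact vert_linear : linear vert.
Proof. by move=> c u v; rewrite /vert; congr (_, _); rewrite /= ?scaler0 ?addr0. Qed.
HB.instance Definition _ := GRing.isLinear.Build 'F_2 L V _ vert vert_linear.

Definition basisL := vbasis {:L}.
Definition e (i : 'I_(\dim {:L})) : L := basisL`_i.
Definition cf (i : 'I_(\dim {:L})) : 'Hom(L, ('F_2)^o) :=
  linfun (coord basisL i : L -> ('F_2)^o).

Definition i0 : 'I_(\dim {:L}) := Ordinal (ltn_trans (isT : (0 < 2)%N) dimL3).
Definition i1 : 'I_(\dim {:L}) := Ordinal (ltn_trans (isT : (1 < 2)%N) dimL3).
Definition i2 : 'I_(\dim {:L}) := Ordinal dimL3.

Lemma basisL_free : free basisL. Proof. exact: basis_free (vbasisP _). Qed.

Lemma cf_e i j : cf i (e j) = (j == i)%:R.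
Proof. by rewrite lfunE /= coord_free // basisL_free. Qed.

Lemma e_neq0 i : e i != 0.
Proof. by apply: (free_not0 basisL_free); apply: mem_nth; rewrite size_tuple. Qed.

Lemma e_inj i j : e i = e j -> i = j.
Proof.
move/eqP; rewrite /e nth_uniq ?size_tuple ?free_uniq ?basisL_free //.
by move/eqP/val_inj.
Qed.

(* The pencil P_x = {c0, g_x, c0 + g_x}: g_x is c1 at e1, c2 at e2 and
   c1 + c2 elsewhere, so that the pencils contain all seven nonzero forms
   spanned by c0, c1, c2. *)
Definition pform (x : L) : 'Hom(L, ('F_2)^o) :=
  if x == e i1 then cf i1 else if x == e i2 then cf i2 else cf i1 + cf i2.

Definition pencil (x : L) (j : 'I_3) : 'Hom(L, ('F_2)^o) :=
  if val j == 0%N then cf i0 else if val j == 1%N then pform x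
  else cf i0 + pform x.

Lemma pform_e1 : pform (e i1) = cf i1. Proof. by rewrite /pform eqxx. Qed.

Lemma pform_e2 : pform (e i2) = cf i2.
Proof. by rewrite /pform ifN ?eqxx //; apply/eqP => /e_inj/(congr1 val). Qed.

Lemma pform_e0 : pform (e i0) = cf i1 + cf i2.
Proof. by rewrite /pform !ifN //; apply/eqP => /e_inj/(congr1 val). Qed.

Lemma pencil_neq0 x j : exists y, pencil x j y != 0.
Proof.
have c0e0 : cf i0 (e i0) = 1 by rewrite cf_e eqxx.
have ge0 : pform x (e i0) = 0.
  by rewrite /pform; do 2?case: ifP => _; rewrite ?add_lfunE !cf_e ?addr0.
rewrite /pencil; case: ifP => _; first by exists (e i0); rewrite c0e0 oner_eq0.
case: ifP => _; last by exists (e i0); rewrite add_lfunE c0e0 ge0 addr0 oner_eq0.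
rewrite /pform; case: ifP => _; first by exists (e i1); rewrite cf_e eqxx oner_eq0.
case: ifP => _; first by exists (e i2); rewrite cf_e eqxx oner_eq0.
by exists (e i1); rewrite add_lfunE !cf_e eqxx addr0 oner_eq0.
Qed.

Definition unit_point (f : 'Hom(L, ('F_2)^o)) : L := odflt 0 [pick y | f y != 0].

Lemma unit_pointP (f : 'Hom(L, ('F_2)^o)) (y : L) :
  f y != 0 -> f (unit_point f) = 1.
Proof.
move=> fy; rewrite /unit_point; case: pickP => [z /= fz|/(_ y)]; last by rewrite fy.
by case: (F2_cases (f z)) fz => ->; rewrite ?eqxx.
Qed.

Definition kspace (x : L) (j : 'I_3) (shift : bool) : {vspace V} :=
  (<[(x, if shift then unit_point (pencil x j) else 0%R)]>
     + linfun vert @: lker (pencil x j))%VS.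

Lemma dim_kspace x j shift : (\dim (kspace x j shift) <= \dim {:L})%N.
Proof.
have [y fy] := pencil_neq0 x j.
apply: leq_trans (dimv_add_leqif _ _) _.
apply: leq_trans (leq_add (_ : _ <= 1)%N (dim_img_le _ _)) _.
  by rewrite dim_vline leq_b1.
by rewrite add1n (dim_lker_lt fy).
Qed.

Lemma kspace_vert x j shift y :
  pencil x j y = 0 -> ((0, y) : V) \in kspace x j shift.
Proof.
move=> fy; apply: subvP (addvSr _ _) _ _.
by rewrite -[(0, y)]/(vert y) -lfunE memv_img // memv_ker fy.
Qed.

Lemma kspace_base x j shift :
  ((x, if shift then unit_point (pencil x j) else 0) : V) \in kspace x j shift.
Proof. exact: subvP (addvSl _ _) _ (memv_line _). Qed.

(* Pairs (0, y), (x, y'): choose the form of P_x vanishing at y, and the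
   shift according to its value at y'. *)
Lemma kspace_cover (x y y' : L) :
  exists j shift, ((0, y) : V) \in kspace x j shift /\
                  ((x, y') : V) \in kspace x j shift.
Proof.
have [j fy] : exists j, pencil x j y = 0.
  case: (F2_cases (cf i0 y)) => h0; first by exists (@Ordinal 3 0 isT).
  case: (F2_cases (pform x y)) => h1; first by exists (@Ordinal 3 1 isT).
  by exists (@Ordinal 3 2 isT); rewrite /pencil /= add_lfunE h0 h1 F2_add11.
have [fy'0|fy'] := eqVneq (pencil x j y') 0.
  exists j, false; split; first exact: kspace_vert.
  have -> : ((x, y') : V) = (x, 0) + (0, y').
    by congr (_, _); rewrite /= ?addr0 ?add0r.
  by rewrite memvD ?(kspace_base x j false) ?kspace_vert.
exists j, true; split; first exact: kspace_vert.
have fy'1 : pencil x j y' = 1.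
  by case: (F2_cases (pencil x j y')) fy' => ->; rewrite ?eqxx.
set w := unit_point (pencil x j).
have -> : ((x, y') : V) = (x, w) + (0, y' - w).
  by congr (_, _); rewrite /= ?addr0 ?add0r // addrC subrK.
rewrite memvD ?(kspace_base x j true) // kspace_vert //.
by rewrite linearB /= fy'1 (unit_pointP fy') subrr.
Qed.

(* Pairs (0, y), (0, y'): some nonzero combination of c0, c1, c2 kills
   both, and it belongs to some pencil P_x. *)
Lemma pencils_cover (y y' : L) :
  exists x j, [/\ x != 0, ((0, y) : V) \in kspace x j false
                        & ((0, y') : V) \in kspace x j false].
Proof.
have cover x (j : 'I_3) : x != 0 -> pencil x j y = 0 -> pencil x j y' = 0 ->
    exists x j, [/\ x != 0, ((0, y) : V) \in kspace x j false
                          & ((0, y') : V) \in kspace x j false].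
  by move=> x0 fy fy'; exists x, j; split; rewrite // kspace_vert.
have := F2_fano (cf i0 y) (cf i1 y) (cf i2 y) (cf i0 y') (cf i1 y') (cf i2 y').
move=> /or4P[H|H|H|/or4P[H|H|H|H]]; move: H => /andP[/eqP h /eqP h'].
- by apply: (cover (e i0) (@Ordinal 3 0 isT)); rewrite ?e_neq0.
- by apply: (cover (e i1) (@Ordinal 3 1 isT)); rewrite ?e_neq0 // /pencil /= pform_e1.
- by apply: (cover (e i1) (@Ordinal 3 2 isT));
    rewrite ?e_neq0 // /pencil /= pform_e1 add_lfunE.
- by apply: (cover (e i2) (@Ordinal 3 1 isT)); rewrite ?e_neq0 // /pencil /= pform_e2.
- by apply: (cover (e i2) (@Ordinal 3 2 isT));
    rewrite ?e_neq0 // /pencil /= pform_e2 add_lfunE.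
- by apply: (cover (e i0) (@Ordinal 3 1 isT));
    rewrite ?e_neq0 // /pencil /= pform_e0 add_lfunE.
- by apply: (cover (e i0) (@Ordinal 3 2 isT));
    rewrite ?e_neq0 // /pencil /= pform_e0 !add_lfunE.
Qed.

Definition family : seq {vspace V} :=
  [seq graph ab.1 ab.2 | ab <- enum {: L * L}] ++
  [seq kspace x js.1 js.2 | x <- enum (predC1 (0 : L)), js <- enum {: 'I_3 * bool}].

Lemma size_family : size family = (#|L| ^ 2 + 6 * (#|L| - 1))%N.
Proof.
rewrite size_cat size_map size_allpairs -!cardE !card_prod cardC1 card_ord card_bool.
by rewrite mulnn subn1 mulnC.
Qed.

Lemma family_dim : {in family, forall U, (\dim U <= \dim {:L})%N}.
Proof.
move=> U; rewrite mem_cat => /orP[/mapP[ab _ ->]|/allpairsP[[x js] [_ _ ->]]].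
  exact: dim_graph.
exact: dim_kspace.
Qed.

Lemma graph_in_family a b : graph a b \in family.
Proof.
by rewrite mem_cat (map_f (fun ab => graph ab.1 ab.2) (_ : (a, b) \in _)) ?mem_enum.
Qed.

Lemma kspace_in_family x j shift : x != 0 -> kspace x j shift \in family.
Proof.
move=> x0; rewrite mem_cat orbC.
by rewrite (allpairs_f (fun x js => kspace x js.1 js.2) (_ : x \in _) (_ : (j, shift) \in _))
  ?mem_enum.
Qed.

Lemma family_covers_pairs (u v : V) :
  exists2 U, U \in family & (u \in U) && (v \in U).
Proof.
case: u v => [x1 y1] [x2 y2].
have cover0 x y y' : x != 0 ->
    exists2 U, U \in family & (((0, y) : V) \in U) && (((x, y') : V) \in U).
  move=> x0; have [j [s [h h']]] := kspace_cover x y y'.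
  by exists (kspace x j s); rewrite ?kspace_in_family ?h ?h'.
have [->|x1n0] := eqVneq x1 0.
  have [->|x2n0] := eqVneq x2 0; last exact: cover0.
  have [x [j [x0 h h']]] := pencils_cover y1 y2.
  by exists (kspace x j false); rewrite ?kspace_in_family ?h ?h'.
have [->|x2n0] := eqVneq x2 0.
  by have [U fU /andP[h h']] := cover0 x1 y2 y1 x1n0; exists U; rewrite ?h ?h'.
have [<-|x12] := eqVneq x1 x2.
  have [U fU /andP[h h']] := cover0 x1 (y1 - y2) y2 x1n0; exists U => //.
  have -> : ((x1, y1) : V) = (0, y1 - y2) + (x1, y2).
    by congr (_, _); rewrite /= ?add0r ?subrK.
  by rewrite h' andbT memvD.
have [a [b [e1 e2]]] := graph_interpolation y1 y2 x1n0 x2n0 x12.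
by exists (graph a b); rewrite ?graph_in_family // -e1 -e2 !mem_graph.
Qed.

End PairCoveringFamily.

Theorem mainTheorem7 (k : nat) : 3 <= k ->
  q_covering_number 'F_2 (2 * k) k 2 <= 2 ^ (2 * k) + 6 * (2 ^ k - 1).
Proof.
move=> k3; have [F charF cardF] := @pPrimePowerField 2 k isT (ltnW (ltnW k3)).
pose L := pPrimeCharType charF.
have cardL : #|L| = 2 ^ k by [].
have dimL : \dim {:L} = k by rewrite pprimeChar_dimf cardF pfactorK.
have dimV : dim (L * L)%type = 2 * k.
  by rewrite -[LHS]/(dim L + dim L) -dimvf dimL addnn mul2n.
have dimL3 : 2 < \dim {:L} by rewrite dimL.
have := covering_number_le _ (@family_dim _ _ dimL3) (@family_covers_pairs _ _ dimL3).
rewrite dimV dimL size_family cardL -expnM [k * 2]mulnC; apply.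
by rewrite leq_pmull.
Qed.
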